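(* Let $M$ be a graded generalized Eulerian $A_n(K)$-module, $n\ge2$. Then $H_1(X_n;M)=\ker(X_n\colon M(-1)\to M)$ and $H_0(X_n;M)=M/X_nM$ are generalized Eulerian $A_{n-1}(K)$-modules.
   Context: $K$ is a field of characteristic zero; $A_n(K)=K\langle X_1,\dots,X_n,\partial_1,\dots,\partial_n\rangle$ graded by $\deg X_i=1$, $\deg\partial_i=-1$; $A_{n-1}(K)\subseteq A_n(K)$ is generated by $X_1,\dots,X_{n-1},\partial_1,\dots,\partial_{n-1}$ and acts on $H_1(X_n;M)$ and $H_0(X_n;M)$. $\mathcal E_m=\sum_{i=1}^mX_i\partial_i$; $|z|$ is the degree of homogeneous $z$. A graded $A_m(K)$-module $M$ is generalized Eulerian if for every homogeneous $z$ there is $a\ge1$ with $(\mathcal E_m-|z|)^az=0$. $M(l)_j=M_{j+l}$. *)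

From HB Require Import structures.
From mathcomp Require Import all_boot all_order all_algebra.
Set Implicit Arguments. Unset Strict Implicit. Unset Printing Implicit Defensive.
Import Order.TTheory GRing.Theory Num.Theory.
Local Open Scope ring_scope.

(* The Weyl algebra A_n(K) = K<X_1..X_n, d_1..d_n> is given by generators and
   relations; a (left) A_n(K)-module structure on a K-vector space V is the same
   as K-linear operators X i, D i (i < n, 0-based: X i stands for X_{i+1})
   satisfying the Weyl relations.  The grading deg X_i = 1, deg d_i = -1 on a
   graded module M = (+)_j M_j is encoded by the family of subspaces Mdeg j
   (V is their internal direct sum) with X i (M_j) <= M_(j+1), D i (M_j) <= M_(j-1).
   A_{m}(K) (m <= n) is the subalgebra generated by the first m pairs. *)

Section Defs.
Variables (K : fieldType) (V : lmodType K).

Definition is_subspace (S : pred V) : Prop :=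
  0 \in S /\ forall (a : K) (u v : V), u \in S -> v \in S -> a *: u + v \in S.

Definition graded_weyl_module (n : nat) (Mdeg : int -> pred V)
    (X D : nat -> V -> V) : Prop :=
  [/\
      (forall j, is_subspace (Mdeg j)),
      (forall v : V, exists (s : seq int) (f : int -> V),
          uniq s /\ (forall j, f j \in Mdeg j) /\ v = \sum_(j <- s) f j),
      (forall (s : seq int) (f : int -> V), uniq s ->
          (forall j, f j \in Mdeg j) -> \sum_(j <- s) f j = 0 ->
          forall j, j \in s -> f j = 0),
      (forall i, (i < n)%N ->
         [/\ forall (a : K) (u v : V), X i (a *: u + v) = a *: X i u + X i v,
             forall (a : K) (u v : V), D i (a *: u + v) = a *: D i u + D i v,
             forall j v, v \in Mdeg j -> X i v \in Mdeg (j + 1) &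
             forall j v, v \in Mdeg j -> D i v \in Mdeg (j - 1)]) &
      (forall i k, (i < n)%N -> (k < n)%N -> forall v : V,
         [/\ X i (X k v) = X k (X i v),
             D i (D k v) = D k (D i v) &
             D i (X k v) - X k (D i v) = (if i == k then v else 0)])].

Definition euler (m : nat) (X D : nat -> V -> V) (v : V) : V :=
  \sum_(i < m) X i (D i v).

Definition euler_shift_pow (m : nat) (X D : nat -> V -> V) (d : int) (a : nat)
    (z : V) : V :=
  iter a (fun w => euler m X D w - d%:~R *: w) z.

Definition gen_eulerian (m : nat) (Mdeg : int -> pred V) (X D : nat -> V -> V)
    : Prop :=
  forall (d : int) (z : V), z \in Mdeg d ->
    exists a : nat, (1 <= a)%N /\ euler_shift_pow m X D d a z = 0.

(* H_1(X_n; M) = ker (X_n : M(-1) -> M), a graded A_{n-1}(K)-module with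
   (H_1)_d = ker X_n  intersected with  M_(d-1); the A_{n-1}(K)-action is the
   restriction of that of M. *)
Definition H1_gen_eulerian (n : nat) (Mdeg : int -> pred V)
    (X D : nat -> V -> V) : Prop :=
  forall (d : int) (z : V), z \in Mdeg (d - 1) -> X n.-1 z = 0 ->
    exists a : nat, (1 <= a)%N /\ euler_shift_pow n.-1 X D d a z = 0.

(* H_0(X_n; M) = M / X_n M, graded by (H_0)_d = image of M_d; an element of
   (H_0)_d is the class of some z in M_d, and a class is zero iff its
   representative lies in X_n M. *)
Definition H0_gen_eulerian (n : nat) (Mdeg : int -> pred V)
    (X D : nat -> V -> V) : Prop :=
  forall (d : int) (z : V), z \in Mdeg d ->
    exists a : nat, (1 <= a)%N /\
      exists w : V, euler_shift_pow n.-1 X D d a z = X n.-1 w.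

End Defs.

(* Write E_k for the Euler operator of the first k variables and x := X_n.
   Then E_n = E_(n-1) + x d_n, and x commutes with E_(n-1).  On ker x the
   relation d_n x - x d_n = 1 gives x d_n = -1, so E_(n-1) - d = E_n - (d - 1)
   there, and ker x is stable under E_(n-1); hence (E_(n-1) - d)^a kills every
   element of ker x of degree d - 1.  Modulo x M the two operators E_(n-1) - d
   and E_n - d agree, and x M is stable under E_(n-1) - d; hence their a-th
   powers agree modulo x M as well. *)

From HB Require Import structures.
From mathcomp Require Import all_boot all_order all_algebra.
Import Order.TTheory GRing.Theory Num.Theory.
Local Open Scope ring_scope.

Set Implicit Arguments. Unset Strict Implicit.

Section LinearFun.
Variables (R : pzRingType) (U W : lmodType R) (f : U -> W).
Hypothesis f_lin : linear f.

Lemma linear_funD : {morph f : u v / u + v}.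
Proof. by case: (GRing.semilinear_linear f_lin). Qed.

Lemma linear_funZ (a : R) : {morph f : u / a *: u}.
Proof. by case: (GRing.semilinear_linear f_lin). Qed.

Lemma linear_fun0 : f 0 = 0.
Proof. by rewrite -(scale0r 0) linear_funZ scale0r. Qed.

End LinearFun.

Lemma eq_in_iter (T : Type) (P : T -> Prop) (f g : T -> T) (a : nat) (z : T) :
  (forall w, P w -> P (g w)) -> (forall w, P w -> f w = g w) -> P z ->
  iter a f z = iter a g z.
Proof.
move=> gP fg Pz; suff: P (iter a g z) /\ iter a f z = iter a g z by case.
by elim: a => [|a [Pa IH]] //=; rewrite IH fg //; split=> //; apply: gP.
Qed.

Lemma iter_congr_image (T : zmodType) (x f g : T -> T) (a : nat) (z : T) :
  {morph x : u v / u + v} -> {morph g : u v / u + v} ->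
  (forall y, g (x y) = x (g y)) -> (forall w, exists y, f w = g w + x y) ->
  exists y, iter a f z = iter a g z + x y.
Proof.
move=> xD gD gx fg; elim: a => [|a [y IH]] /=.
  have x0 : x 0 = 0 by apply: (addrI (x 0)); rewrite -xD !addr0.
  by exists 0; rewrite x0 addr0.
have [y' ->] := fg (iter a f z); rewrite IH.
by exists (g y + y'); rewrite gD gx xD addrA.
Qed.

(* [X m], [D m] stand for X_n, d_n: the indices are 0-based and n = m.+1. *)
Section WeylLastVariable.
Variables (K : fieldType) (V : lmodType K) (m : nat) (X D : nat -> V -> V).
Hypothesis X_lin : forall i, (i <= m)%N -> linear (X i).
Hypothesis D_lin : forall i, (i <= m)%N -> linear (D i).
Hypothesis X_comm : forall i, (i < m)%N -> forall v, X m (X i v) = X i (X m v).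
Hypothesis DX_comm : forall i, (i <= m)%N -> forall v,
  D i (X m v) - X m (D i v) = (if i == m then v else 0).

Definition euler_shift (k : nat) (d : int) (w : V) : V :=
  euler k X D w - d%:~R *: w.

Lemma euler_shift_powE k d a z :
  euler_shift_pow k X D d a z = iter a (euler_shift k d) z.
Proof. by []. Qed.

Lemma euler_linear k : (k <= m.+1)%N -> linear (euler k X D).
Proof.
move=> km c u v; rewrite /euler scaler_sumr -big_split; apply: eq_bigr => i _.
have im : (i <= m)%N by rewrite -ltnS (leq_trans _ km).
by rewrite D_lin // X_lin.
Qed.

Lemma euler_shift_linear k d : (k <= m.+1)%N -> linear (euler_shift k d).
Proof.
move=> km c u v; rewrite /euler_shift euler_linear // scalerDr scalerA mulrC.
by rewrite -scalerA scalerBr opprD addrACA.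
Qed.

Lemma euler_recr w : euler m.+1 X D w = euler m X D w + X m (D m w).
Proof. by rewrite /euler big_ord_recr. Qed.

Lemma X_last_euler_shift d w :
  X m (euler_shift m d w) = euler_shift m d (X m w).
Proof.
have Xm_lin := X_lin (leqnn m).
rewrite /euler_shift (linear_funD Xm_lin) -scaleNr (linear_funZ Xm_lin) scaleNr.
rewrite /euler (big_morph _ (linear_funD Xm_lin) (linear_fun0 Xm_lin)).
congr (_ - _); apply: eq_bigr => i _.
have im : (i <= m)%N by apply: ltnW.
have := DX_comm im w; rewrite ifN ?neq_ltn ?ltn_ord // => /eqP; rewrite subr_eq0.
by move=> /eqP ->; rewrite X_comm.
Qed.

Lemma X_last_D_last_kernel w : X m w = 0 -> X m (D m w) = - w.
Proof.
move=> xw; have := DX_comm (leqnn m) w.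
by rewrite eqxx xw (linear_fun0 (D_lin (leqnn m))) sub0r => /eqP; rewrite eqr_oppLR => /eqP.
Qed.

Lemma euler_shift_kernel d w :
  X m w = 0 -> euler_shift m.+1 (d - 1) w = euler_shift m d w.
Proof.
move=> xw; rewrite /euler_shift euler_recr X_last_D_last_kernel //.
by rewrite rmorphB /= scalerBl scale1r opprB addrA subrK.
Qed.

Lemma euler_shift_last d w :
  euler_shift m.+1 d w = euler_shift m d w + X m (D m w).
Proof. by rewrite /euler_shift euler_recr addrAC. Qed.

End WeylLastVariable.

Lemma graded_weyl_module_last (K : fieldType) (V : lmodType K) (m : nat)
    (Mdeg : int -> pred V) (X D : nat -> V -> V) :
  graded_weyl_module m.+1 Mdeg X D ->
  [/\ forall i, (i <= m)%N -> linear (X i),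
      forall i, (i <= m)%N -> linear (D i),
      forall i, (i < m)%N -> forall v, X m (X i v) = X i (X m v) &
      forall i, (i <= m)%N -> forall v,
        D i (X m v) - X m (D i v) = (if i == m then v else 0)].
Proof.
case=> _ _ _ lin weyl; split=> i im.
- by case: (lin i im).
- by case: (lin i im).
- by move=> v; case: (weyl m i (leqnn _) (ltnW im) v).
- by move=> v; case: (weyl i m im (leqnn _) v).
Qed.

Unset Implicit Arguments.

Theorem mainTheorem9 (K : fieldType) (charK0 : [pchar K] =i pred0)
    (V : lmodType K) (n : nat) (Mdeg : int -> pred V) (X D : nat -> V -> V) :
  (2 <= n)%N ->
  graded_weyl_module n Mdeg X D ->
  gen_eulerian n Mdeg X D ->
  H1_gen_eulerian n Mdeg X D /\ H0_gen_eulerian n Mdeg X D.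
Proof.
case: n => [|m] // _ hG hE.
have [X_lin D_lin X_comm DX_comm] := graded_weyl_module_last hG.
have Xm_lin := X_lin m (leqnn m).
have shift_lin d := euler_shift_linear X_lin D_lin d (leqnSn m).
split=> [d z zd xz | d z zd].
- have [a [a1 killed]] := hE _ _ zd; exists a; split => //.
  rewrite euler_shift_powE /= -killed euler_shift_powE; symmetry.
  apply: (@eq_in_iter _ (fun w => X m w = 0)); last exact: xz.
    by move=> w xw; rewrite X_last_euler_shift // xw linear_fun0.
  by move=> w xw; rewrite euler_shift_kernel.
- have [a [a1 killed]] := hE _ _ zd; exists a; split => //.
  have X_comm_shift y : euler_shift X D m d (X m y) = X m (euler_shift X D m d y).
    by rewrite X_last_euler_shift.
  have shift_mod_image w : exists y,
      euler_shift X D m.+1 d w = euler_shift X D m d w + X m y.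
    by exists (D m w); rewrite euler_shift_last.
  have [y shifted] := iter_congr_image a z (linear_funD Xm_lin)
    (linear_funD (shift_lin d)) X_comm_shift shift_mod_image.
  exists (- y); rewrite euler_shift_powE /= -[- y]scaleN1r linear_funZ // scaleN1r.
  by apply/eqP; rewrite -addr_eq0 -shifted -euler_shift_powE killed.
Qed.
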